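(* Let $S$ be a set and let $d : S \times S \to \{0,1\}$ be a function satisfying, for all $x, x', x'' \in S$: $d(x,x) = 0$, $d(x,x') = d(x',x)$, and $d(x,x'') \le d(x,x') + d(x',x'')$. For a finite sequence $(x_1, \ldots, x_n)$ of elements of $S$ (repetitions allowed), $n \ge 1$, define its discrete uniqueness \[ U_d(x_1,\ldots,x_n) \coloneqq \frac{1}{n}\sum_{i=1}^{n} I\!\left(\bigwedge_{j=1}^{i-1} \bigl(d(x_i,x_j) \neq 0\bigr)\right), \] where $I$ of a proposition is $1$ if the proposition is true and $0$ otherwise (the empty conjunction, for $i=1$, is true). Then for every permutation $\sigma$ of $\{1,\ldots,n\}$, \[ U_d(x_{\sigma(1)},\ldots,x_{\sigma(n)}) = U_d(x_1,\ldots,x_n). \]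
   Context: In the paper, $S$ is a space of crystals, $(x_1,\ldots,x_n)$ is the list of generated samples in generation order, and $d$ is a discrete (0/1-valued) crystal distance function; the theorem states that discrete uniqueness defined via such a $d$ that is a genuine pseudometric is invariant under permutation of the generated samples. *)

From mathcomp Require Import all_boot all_order all_algebra all_fingroup.
Set Implicit Arguments. Unset Strict Implicit. Unset Printing Implicit Defensive.
Import GRing.Theory Num.Theory.
Local Open Scope ring_scope.

Definition is_discrete_pseudometric (S : Type) (d : S -> S -> nat) : Prop :=
  [/\ forall x y, (d x y <= 1)%N,
      forall x, d x x = 0%N,
      forall x y, d x y = d y x
    & forall x y z, (d x z <= d x y + d y z)%N].

Definition discrete_uniqueness (S : Type) (d : S -> S -> nat) (n : nat)
    (x : 'I_n -> S) : rat :=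
  n%:R^-1 * \sum_(i < n)
    (if [forall j : 'I_n, (j < i)%N ==> (d (x i) (x j) != 0%N)] then 1 else 0).

(* An index i contributes to the uniqueness iff it is the first element of its
   class for the equivalence "d(x_i, x_j) = 0" (an equivalence because d is a
   pseudometric).  Hence the numerator counts the classes, and permuting the
   indices only relabels them. *)
From mathcomp Require Import all_boot all_order all_algebra all_fingroup.

Set Implicit Arguments.
Unset Strict Implicit.
Unset Printing Implicit Defensive.

Import GRing.Theory.

Definition eclass (T : finType) (e : rel T) (i : T) : {set T} := [set j | e i j].

Lemma eclass_relpre_perm (T : finType) (e : rel T) (s : {perm T}) (i : T) :
  eclass (relpre s e) i = s @^-1: eclass e (s i).
Proof. by apply/setP => j; rewrite !inE. Qed.

Lemma card_eclasses_perm (T : finType) (e : rel T) (s : {perm T}) :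
  #|[set eclass (relpre s e) i | i : T]| = #|[set eclass e i | i : T]|.
Proof.
have -> : [set eclass (relpre s e) i | i : T]
        = [set s @^-1: A | A : {set T} in [set eclass e i | i : T]].
  apply/setP => A; apply/imsetP/imsetP => [[i _ ->] | [_ /imsetP[i _ ->] ->]].
    by exists (eclass e (s i)); rewrite ?imset_f ?eclass_relpre_perm.
  by exists ((s^-1)%g i); rewrite ?eclass_relpre_perm ?permKV.
apply: card_imset => A B /setP sAB; apply/setP => j.
by have := sAB ((s^-1)%g j); rewrite !inE permKV.
Qed.

Section FirstInClass.
Variables (n : nat) (e : rel 'I_n).
Hypotheses (e_refl : reflexive e) (e_sym : symmetric e) (e_trans : transitive e).

Definition first_in_class (i : 'I_n) := [forall j : 'I_n, (j < i)%N ==> ~~ e i j].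

Lemma first_in_class_uniq i j :
  first_in_class i -> first_in_class j -> e i j -> i = j.
Proof.
have lt_first k l : first_in_class l -> e k l -> ~ (k < l)%N.
  by move=> /forallP /(_ k) /implyP fl ekl /fl; rewrite e_sym ekl.
move=> fi fj eij; apply/val_inj; case: (ltngtP i j) => // [ltij | ltji].
  by case: (lt_first _ _ fj eij ltij).
by case: (lt_first _ _ fi _ ltji); rewrite e_sym.
Qed.

Lemma exists_first_in_class i : exists2 j, first_in_class j & e i j.
Proof.
case: (arg_minnP val (e_refl i)) => j eij j_min; exists j => //.
apply/forallP => k; apply/implyP => ltkj; apply/negP => ejk.
by have := j_min k (e_trans eij ejk); rewrite leqNgt ltkj.
Qed.

Lemma eclassP i j : reflect (eclass e i = eclass e j) (e i j).
Proof.
apply: (iffP idP) => [eij | /setP /(_ j)]; last by rewrite !inE e_refl.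
by apply/setP => k; rewrite !inE; apply/idP/idP; apply: e_trans; rewrite // e_sym.
Qed.

Lemma card_first_in_class :
  #|[set i | first_in_class i]| = #|[set eclass e i | i : 'I_n]|.
Proof.
rewrite -(card_in_imset (f := eclass e)); last first.
  by move=> i j; rewrite !inE => fi fj /eclassP; apply: first_in_class_uniq.
congr #|pred_of_set _|; apply/setP => A; apply/imsetP/imsetP => -[i _ ->].
  by exists i.
have [j fj eij] := exists_first_in_class i.
by exists j; [rewrite inE | apply/eclassP].
Qed.

End FirstInClass.

Definition coincident (S : Type) (d : S -> S -> nat) : rel S :=
  fun a b => d a b == 0%N.

Section Coincident.
Variables (S : Type) (d : S -> S -> nat).
Hypothesis hd : is_discrete_pseudometric d.

Lemma coincident_refl : reflexive (coincident d).
Proof. by case: hd => _ d0 _ _ a; rewrite /coincident d0. Qed.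

Lemma coincident_sym : symmetric (coincident d).
Proof. by case: hd => _ _ dC _ a b; rewrite /coincident dC. Qed.

Lemma coincident_trans : transitive (coincident d).
Proof.
case: hd => _ _ _ dtri b a c /eqP dab /eqP dbc.
by rewrite /coincident -leqn0 -(addn0 0) -{1}dab -dbc dtri.
Qed.

Lemma card_first_coincident n (x : 'I_n -> S) :
  #|[set i | first_in_class (relpre x (coincident d)) i]|
  = #|[set eclass (relpre x (coincident d)) i | i : 'I_n]|.
Proof.
apply: card_first_in_class => [i | i j |]; first exact: coincident_refl.
  exact: coincident_sym.
exact/relpre_trans/coincident_trans.
Qed.

End Coincident.

Local Open Scope ring_scope.

Lemma discrete_uniquenessE (S : Type) (d : S -> S -> nat) (n : nat)
    (x : 'I_n -> S) :
  discrete_uniqueness d x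
  = n%:R^-1 * #|[set i | first_in_class (relpre x (coincident d)) i]|%:R.
Proof.
rewrite /discrete_uniqueness -big_mkcond sumr_const; congr (_ * (_ *+ _)).
by apply: eq_card => i; rewrite inE.
Qed.

Theorem mainTheorem1 (S : Type) (d : S -> S -> nat) (n : nat)
  (hd : is_discrete_pseudometric d) (hn : (1 <= n)%N)
  (x : 'I_n -> S) (sigma : 'S_n) :
  discrete_uniqueness d (fun i => x (sigma i)) = discrete_uniqueness d x.
Proof.
rewrite !discrete_uniquenessE !card_first_coincident //.
by rewrite -[relpre _ _]/(relpre sigma (relpre x (coincident d))) card_eclasses_perm.
Qed.
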